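(* Let $V$ be a finite-dimensional complex vector space and $K\subseteq\bigwedge^2V$ a subspace. If $[a\wedge b]$ is an isolated point of $\mathbf{P}K^\perp\cap\mathrm{Gr}_2(V^\vee)$, then the line $\ell_{ab}\subseteq\mathbf{P}V^\vee$ through $[a]$ and $[b]$ is a connected component of the projectivized resonance variety $\mathbf{R}(V,K)$, and the span of $a,b$ is isotropic.
   Context: $K^\perp\subseteq\bigwedge^2V^\vee$ is the annihilator of $K$; $\mathrm{Gr}_2(V^\vee)\subseteq\mathbf{P}(\bigwedge^2V^\vee)$ is Plücker embedded. The resonance variety is $\mathcal{R}(V,K)=\{a\in V^\vee:\exists b\in V^\vee,\ a\wedge b\in K^\perp\setminus\{0\}\}\cup\{0\}$, and $\mathbf{R}(V,K)\subseteq\mathbf{P}V^\vee$ is its projectivization (the union of the lines $\ell_{ab}$ for $[a\wedge b]\in\mathbf{P}K^\perp\cap\mathrm{Gr}_2(V^\vee)$). A subspace $\overline{V}^\vee\subseteq V^\vee$ is isotropic if $\bigwedge^2\overline V^\vee\subseteq K^\perp$. *)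

From HB Require Import structures.
From mathcomp Require Import all_boot all_order all_algebra.
From mathcomp Require Import complex.
From mathcomp Require Import all_classical all_reals all_analysis.
Set Implicit Arguments. Unset Strict Implicit. Unset Printing Implicit Defensive.
Import Order.TTheory GRing.Theory Num.Theory.
Import numFieldTopology.Exports numFieldNormedType.Exports.

(* Euclidean (metric) topology on the complex numbers R[i], induced by the
   complex modulus; matrices/row vectors over R[i] then get the product topology. *)
#[export, non_forgetful_inheritance]
HB.instance Definition _ (R : realType) := PseudoPointedMetric.copy R[i] (R[i])^o.
Local Open Scope ring_scope.
Local Open Scope classical_set_scope.

(* Model: V^\vee = C^n = 'rV[C]_n with C = R[i] the complex numbers (R : realType).
   V is identified with C^n via the standard pairing.
   bigwedge^2 V^\vee and bigwedge^2 V are modelled as rv_skew-symmetric n x n matrices,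
   a /\ b := a^T b - b^T a  (entries a_i b_j - a_j b_i). *)

Definition rv_wedge (C : ringType) (n : nat) (a b : 'rV[C]_n) : 'M[C]_n :=
  a^T *m b - b^T *m a.

Definition rv_skew (C : ringType) (n : nat) (w : 'M[C]_n) : Prop := w^T = - w.

(* pairing of bigwedge^2 V^\vee with bigwedge^2 V: <w, k> = sum_{i<j} w_ij k_ij;
   here we use tr (w^T k) = 2 sum_{i<j} w_ij k_ij, which has the same zero set. *)
Definition rv_pair (C : ringType) (n : nat) (w k : 'M[C]_n) : C := \tr (w^T *m k).

Definition rv_Kperp (C : fieldType) (n : nat) (K : {vspace 'M[C]_n}) : set 'M[C]_n :=
  [set w | rv_skew w /\ forall k, k \in K -> rv_pair w k = 0].

Definition rv_resonance (C : fieldType) (n : nat) (K : {vspace 'M[C]_n}) : set 'rV[C]_n :=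
  [set x | exists y, rv_Kperp K (rv_wedge x y) /\ rv_wedge x y != 0] `|` [set 0].

(* the 2-plane <a,b> (affine cone over the line l_ab) *)
Definition rv_span2 (C : fieldType) (n : nat) (a b : 'rV[C]_n) : set 'rV[C]_n :=
  [set x | x \in <<[:: a; b]>>%VS].

Definition rv_isotropic (C : fieldType) (n : nat) (K : {vspace 'M[C]_n})
  (U : set 'rV[C]_n) : Prop :=
  forall x y, U x -> U y -> rv_Kperp K (rv_wedge x y).

From HB Require Import structures.
From mathcomp Require Import all_boot all_order all_algebra.
From mathcomp Require Import complex.
From mathcomp Require Import all_classical all_reals all_analysis.
From mathcomp Require Import ring.
Import Order.TTheory GRing.Theory Num.Theory.
Import numFieldTopology.Exports numFieldNormedType.Exports.
Local Open Scope ring_scope.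
Local Open Scope classical_set_scope.

Set Implicit Arguments. Unset Strict Implicit. Unset Printing Implicit Defensive.

(* Fix a nonzero [x] in the plane [<a, b>] and [y] with [x /\ y = a /\ b].  Isolation
   of [a /\ b] forces every [c] with [x /\ c] in [K^perp] into [<a, b>], so the linear
   system "[u /\ y'] in [K^perp], [y'] has the same [p]- and [q]-coordinates as [y]"
   is injective at [u = x].  For [u] in the resonance variety near [x] this system
   still has a (unique) solution, which depends continuously on [u]; then [u /\ y']
   is a decomposable element of [K^perp] close to [a /\ b], hence proportional to it,
   and [u] lies in [<a, b>].  So [<a, b> \ 0] is open in [R(V, K) \ 0]; being a
   closed linear subset minus the origin, it is also relatively closed, and it is
   connected, hence it is a connected component.  Isotropy is immediate, since all
   wedges of vectors of [<a, b>] are multiples of [a /\ b]. *)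

Section MatrixLimits.
Context {K : numFieldType} {T : Type} {F : set_system T} {FF : Filter F}.

Lemma cvg_mxP p q (f : T -> 'M[K]_(p, q)) (l : 'M[K]_(p, q)) :
  f t @[t --> F] --> l <-> forall i j, f t i j @[t --> F] --> l i j.
Proof.
split=> [fl i j | fl].
  have fl_ij := cvg_comp _ _ fl (@coord_continuous K p q i j l); exact: fl_ij.
apply/cvg_ballP => e e0.
have : \forall t \near F, forall ij : 'I_p * 'I_q, ball (l ij.1 ij.2) e (f t ij.1 ij.2).
  by apply: filter_forall => -[i j]; exact: (cvg_ballP _ _).1 (fl i j) e e0.
by apply: filterS => t lft; split=> // i j; exact: (lft (i, j)).
Qed.

Lemma cvg_trmx p q (f : T -> 'M[K]_(p, q)) (l : 'M[K]_(p, q)) :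
  f t @[t --> F] --> l -> (f t)^T @[t --> F] --> l^T.
Proof.
move=> /cvg_mxP fl; apply/cvg_mxP => i j.
under eq_cvg do rewrite mxE; rewrite mxE; exact: fl.
Qed.

Lemma cvg_mulmx p q r (f : T -> 'M[K]_(p, q)) (g : T -> 'M[K]_(q, r))
    (lf : 'M[K]_(p, q)) (lg : 'M[K]_(q, r)) :
  f t @[t --> F] --> lf -> g t @[t --> F] --> lg -> f t *m g t @[t --> F] --> lf *m lg.
Proof.
move=> /cvg_mxP fl /cvg_mxP gl; apply/cvg_mxP => i j.
under eq_cvg do rewrite mxE; rewrite mxE.
apply: cvg_big => [|k _]; first exact: add_continuous.
exact: cvgM.
Qed.

Lemma cvg_row_mx p q1 q2 (f : T -> 'M[K]_(p, q1)) (g : T -> 'M[K]_(p, q2))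
    (lf : 'M[K]_(p, q1)) (lg : 'M[K]_(p, q2)) :
  f t @[t --> F] --> lf -> g t @[t --> F] --> lg ->
  row_mx (f t) (g t) @[t --> F] --> row_mx lf lg.
Proof.
move=> /cvg_mxP fl /cvg_mxP gl; apply/cvg_mxP => i j.
rewrite -(splitK j); case: (fintype.split j) => k /=.
  by under eq_cvg do rewrite row_mxEl; rewrite row_mxEl; exact: fl.
by under eq_cvg do rewrite row_mxEr; rewrite row_mxEr; exact: gl.
Qed.

Lemma cvg_det p (f : T -> 'M[K]_p) (l : 'M[K]_p) :
  f t @[t --> F] --> l -> \det (f t) @[t --> F] --> \det l.
Proof.
move=> /cvg_mxP fl; rewrite /determinant.
apply: cvg_big => [|s _]; first exact: add_continuous.
apply: cvgM; first exact: cvg_cst.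
apply: cvg_big => [|i _]; [exact: mul_continuous | exact: fl].
Qed.

Lemma cvg_adj p (f : T -> 'M[K]_p) (l : 'M[K]_p) :
  f t @[t --> F] --> l -> \adj (f t) @[t --> F] --> \adj l.
Proof.
move=> /cvg_mxP fl; apply/cvg_mxP => i j.
under eq_cvg do rewrite mxE /cofactor; rewrite mxE /cofactor.
apply: cvgM; first exact: cvg_cst.
apply: cvg_det; apply/cvg_mxP => k k'.
by under eq_cvg do rewrite !mxE; rewrite !mxE; exact: fl.
Qed.

Lemma near_unitmx p (f : T -> 'M[K]_p) (l : 'M[K]_p) : l \in unitmx ->
  f t @[t --> F] --> l -> \forall t \near F, f t \in unitmx.
Proof.
rewrite unitmxE unitfE => detl0 fl.
by apply: filterS (cvgr_neq0 _ (cvg_det fl) detl0) => t; rewrite unitmxE unitfE.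
Qed.

(* Off [unitmx], [invmx A = A]; near a unit limit the adjugate formula applies. *)
Lemma cvg_invmx p (f : T -> 'M[K]_p) (l : 'M[K]_p) : l \in unitmx ->
  f t @[t --> F] --> l -> invmx (f t) @[t --> F] --> invmx l.
Proof.
move=> l_unit fl; pose g t := (\det (f t))^-1 *: \adj (f t).
have g_invmx : \forall t \near F, g t = invmx (f t).
  by apply: filterS (near_unitmx l_unit fl) => t ft_unit; rewrite /invmx ft_unit.
apply: cvg_trans (near_eq_cvg g_invmx) _.
rewrite /invmx l_unit; apply: cvgZ (cvg_adj fl); apply: cvgV (cvg_det fl).
by rewrite -unitfE -unitmxE.
Qed.

Section RowFreeLimit.
Variables (m k : nat) (Y : T -> 'M[K]_(m, k)) (Y0 : 'M[K]_(m, k)).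
Hypotheses (cvgY : Y t @[t --> F] --> Y0) (Y0_free : row_free Y0).

(* With [Y0 *m Z = 1], the solution is [r t *m Z *m invmx (Y t *m Z)]. *)
Lemma cvg_row_free_solve (r : T -> 'rV[K]_k) : r t @[t --> F] --> (0 : 'rV_k) ->
  exists2 D : T -> 'rV[K]_m, D t @[t --> F] --> (0 : 'rV_m) &
    \forall t \near F, forall c, c *m Y t = r t -> c = D t.
Proof.
move=> r0; have [Z Y0Z] := row_freeP Y0_free.
have cvgG : Y t *m Z @[t --> F] --> (1%:M : 'M[K]_m).
  by rewrite -Y0Z; exact: cvg_mulmx cvgY (cvg_cst _).
have one_unit : (1%:M : 'M[K]_m) \in unitmx by rewrite unitmx1.
exists (fun t => r t *m Z *m invmx (Y t *m Z)).
  have -> : (0 : 'rV[K]_m) = 0 *m Z *m invmx 1%:M by rewrite !mul0mx.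
  exact: cvg_mulmx (cvg_mulmx r0 (cvg_cst _)) (cvg_invmx one_unit cvgG).
apply: filterS (near_unitmx one_unit cvgG) => t G_unit c <-.
by rewrite -[c *m Y t *m Z]mulmxA mulmxK.
Qed.

Lemma near_row_free_inj :
  \forall t \near F, forall c : 'rV[K]_m, c *m Y t = 0 -> c = 0.
Proof.
have [D _] := cvg_row_free_solve (cvg_cst (0 : 'rV[K]_k)).
apply: filterS => t solD c cY0.
by rewrite (solD c cY0) -(solD 0) ?mul0mx.
Qed.

End RowFreeLimit.

End MatrixLimits.

Definition coord2_mx {C : nzRingType} {n} (p q : 'I_n) : 'M[C]_(n, 2) :=
  colsub (fun j : 'I_2 => if j == 0 then p else q) 1%:M.

Lemma coord2_mx_eq0 (C : nzRingType) n (p q : 'I_n) (c : 'rV[C]_n) :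
  c *m coord2_mx p q = 0 <-> c 0 p = 0 /\ c 0 q = 0.
Proof.
rewrite /coord2_mx mulmx_colsub mulmx1; split=> [/rowP c0 | [cp cq]].
  by split; [have := c0 0 | have := c0 1]; rewrite !mxE.
by apply/rowP => j; rewrite !mxE; case: ifP.
Qed.

Section Wedge.
Variables (C : fieldType) (n : nat).
Implicit Types (u v w : 'rV[C]_n) (s t : C).

Lemma wedgeE u v i j : rv_wedge u v i j = u 0 i * v 0 j - v 0 i * u 0 j.
Proof. by rewrite /rv_wedge !mxE !big_ord1 !mxE. Qed.

Lemma wedge_skew u v : rv_skew (rv_wedge u v).
Proof. apply/matrixP => i j; rewrite !(wedgeE, mxE); ring. Qed.

Lemma wedgeC u v : rv_wedge v u = - rv_wedge u v.
Proof. apply/matrixP => i j; rewrite !(wedgeE, mxE); ring. Qed.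

Lemma wedgeDr u v w : rv_wedge u (v + w) = rv_wedge u v + rv_wedge u w.
Proof. apply/matrixP => i j; rewrite !(wedgeE, mxE); ring. Qed.

Lemma wedgeZr u v s : rv_wedge u (s *: v) = s *: rv_wedge u v.
Proof. apply/matrixP => i j; rewrite !(wedgeE, mxE); ring. Qed.

Lemma wedgeBr u v w : rv_wedge u (v - w) = rv_wedge u v - rv_wedge u w.
Proof. apply/matrixP => i j; rewrite !(wedgeE, mxE); ring. Qed.

Lemma wedge_combr u v s t :
  rv_wedge u (s *: u + t *: v) = t *: rv_wedge u v.
Proof. apply/matrixP => i j; rewrite !(wedgeE, mxE); ring. Qed.

(* [u] is recovered from two rows of [u /\ v] (a Plücker relation). *)
Lemma wedge_entry_scale u v p q :
  rv_wedge u v p q *: u = u 0 q *: row p (rv_wedge u v) - u 0 p *: row q (rv_wedge u v).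
Proof. apply/rowP => j; rewrite !(wedgeE, mxE); ring. Qed.

Lemma wedge_eq0_colinear u v : u != 0 -> rv_wedge u v = 0 -> exists l, v = l *: u.
Proof.
move=> /rV0Pn[i ui0] uv0; exists (v 0 i / u 0 i); apply/rowP => j; rewrite mxE.
have /eqP : rv_wedge u v i j = 0 by rewrite uv0 mxE.
by rewrite wedgeE subr_eq0 => /eqP uvij; apply: (mulfI ui0); rewrite uvij; field.
Qed.

Lemma wedge0l v : rv_wedge 0 v = 0.
Proof. apply/matrixP => i j; rewrite !(wedgeE, mxE); ring. Qed.

Lemma wedge0r u : rv_wedge u 0 = 0.
Proof. apply/matrixP => i j; rewrite !(wedgeE, mxE); ring. Qed.

Lemma wedge_free u v s t : rv_wedge u v != 0 -> s *: u + t *: v = 0 -> s = 0 /\ t = 0.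
Proof.
move=> uv0 st0.
have /eqP : s *: rv_wedge u v = rv_wedge (s *: u + t *: v) v.
  apply/matrixP => i j; rewrite !(wedgeE, mxE); ring.
have /eqP : t *: rv_wedge u v = rv_wedge u (s *: u + t *: v) by rewrite wedge_combr.
rewrite st0 wedge0l wedge0r !scaler_eq0 (negbTE uv0) !orbF.
by move=> /eqP-> /eqP->; split.
Qed.

End Wedge.

Section Span2.
Variables (C : fieldType) (n : nat) (a b : 'rV[C]_n).
Implicit Types (u v x y c : 'rV[C]_n) (s t mu : C).
Local Notation span2 := <<[:: a; b]>>%VS.

Lemma span2P v : reflect (exists s t, v = s *: a + t *: b) (v \in span2).
Proof.
rewrite span_cons span_seq1; apply: (iffP memv_addP).
  by case=> _ /vlineP[s ->] [_ /vlineP[t ->] ->]; exists s, t.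
case=> s [t ->]; exists (s *: a); first by apply/vlineP; exists s.
by exists (t *: b) => //; apply/vlineP; exists t.
Qed.

Lemma mem_span2l : a \in span2.
Proof. by rewrite memv_span ?mem_head. Qed.

Lemma mem_span2r : b \in span2.
Proof. by rewrite memv_span // !inE eqxx orbT. Qed.

Lemma wedge_span2 x y : x \in span2 -> y \in span2 ->
  exists mu, rv_wedge x y = mu *: rv_wedge a b.
Proof.
move=> /span2P[s [t ->]] /span2P[s' [t' ->]]; exists (s * t' - t * s').
apply/matrixP => i j; rewrite !(wedgeE, mxE); ring.
Qed.

Lemma span2_wedge_eq x : x \in span2 -> x != 0 ->
  exists2 y, y \in span2 & rv_wedge x y = rv_wedge a b.
Proof.
move=> /span2P[s [t ->]] x0; have [s0 | s0] := eqVneq s 0.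
  have t0 : t != 0 by apply: contraNneq x0 => t0; rewrite s0 t0 !scale0r addr0.
  exists (- t^-1 *: a); first by rewrite memvZ ?mem_span2l.
  by apply/matrixP => i j; rewrite s0 !(wedgeE, mxE); field.
exists (s^-1 *: b); first by rewrite memvZ ?mem_span2r.
by apply/matrixP => i j; rewrite !(wedgeE, mxE); field.
Qed.

Lemma mem_span2_wedge u v t : rv_wedge u v = t *: rv_wedge a b ->
  rv_wedge u v != 0 -> u \in span2.
Proof.
move=> uv_ab /matrix0Pn[p [q uv_pq]].
have row_span2 i : row i (rv_wedge u v) \in span2.
  have -> : row i (rv_wedge u v) = (t * a 0 i) *: b - (t * b 0 i) *: a.
    by rewrite uv_ab; apply/rowP => j; rewrite !(wedgeE, mxE); ring.
  by rewrite memvB // memvZ ?mem_span2l ?mem_span2r.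
rewrite -(scalerK uv_pq u) wedge_entry_scale.
by rewrite memvZ // memvB // memvZ.
Qed.

Lemma mem_span2_wedger x c mu : x \in span2 -> x != 0 ->
  rv_wedge x c = mu *: rv_wedge a b -> c \in span2.
Proof.
move=> Sx x0 xc_ab; have [y Sy xy_ab] := span2_wedge_eq Sx x0.
have [l cy_x] : exists l, c - mu *: y = l *: x.
  by apply: wedge_eq0_colinear x0 _; rewrite wedgeBr wedgeZr xy_ab xc_ab subrr.
by rewrite -(subrK (mu *: y) c) cy_x memvD // memvZ.
Qed.

(* Projection onto [span2] along the coordinates other than [p], [q], provided the
   Plücker coordinate [rv_wedge a b p q] is nonzero (otherwise it is [0]). *)
Definition span2_proj p q y :=
  (rv_wedge a b p q)^-1 *: (rv_wedge y b p q *: a + rv_wedge a y p q *: b).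

Lemma span2_proj_mem p q y : span2_proj p q y \in span2.
Proof. by rewrite memvZ // memvD // memvZ ?mem_span2l ?mem_span2r. Qed.

Section Coordinates.
Variables p q : 'I_n.
Hypothesis ab_pq : rv_wedge a b p q != 0.

Lemma span2_interpolate y : exists2 w, w \in span2 & w 0 p = y 0 p /\ w 0 q = y 0 q.
Proof.
exists (span2_proj p q y); first exact: span2_proj_mem.
by move: ab_pq; rewrite /span2_proj !(wedgeE, mxE) => ab_pq'; split; field.
Qed.

Lemma span2_projE v : v \in span2 -> span2_proj p q v = v.
Proof.
move: ab_pq; rewrite wedgeE => ab_pq' /span2P[s [t ->]].
by apply/rowP => j; rewrite /span2_proj !(wedgeE, mxE); field.
Qed.

Lemma span2_coord_eq0 v : v \in span2 -> v 0 p = 0 -> v 0 q = 0 -> v = 0.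
Proof.
move=> Sv vp vq; rewrite -(span2_projE Sv) /span2_proj !wedgeE vp vq.
by rewrite !(mul0r, mulr0, subr0, scale0r, addr0, scaler0).
Qed.

End Coordinates.

Lemma wedge_coord_neq0 p q : rv_wedge a b != 0 ->
  (forall v, v \in span2 -> v 0 p = 0 -> v 0 q = 0 -> v = 0) ->
  rv_wedge a b p q != 0.
Proof.
move=> ab0 span2_pq; apply: contra_neq (ab0) => ab_pq.
have ab_diag r : rv_wedge a b r r = 0 by rewrite wedgeE; ring.
have ab_qp : rv_wedge a b q p = 0.
  have -> : rv_wedge a b q p = - rv_wedge a b p q by rewrite !wedgeE; ring.
  by rewrite ab_pq oppr0.
have coord0 r : rv_wedge a b r p = 0 -> rv_wedge a b r q = 0 -> a 0 r = 0.
  have c_coord i : (b 0 r *: a - a 0 r *: b) 0 i = - rv_wedge a b r i.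
    by rewrite !(wedgeE, mxE); ring.
  move=> rp rq; have := span2_pq (b 0 r *: a - a 0 r *: b).
  rewrite !c_coord rp rq oppr0 memvB ?memvZ ?mem_span2l ?mem_span2r //.
  move=> /(_ isT erefl erefl); rewrite -scaleNr => /(wedge_free ab0)[_ /eqP].
  by rewrite oppr_eq0 => /eqP.
have ap := coord0 p (ab_diag p) ab_pq; have aq := coord0 q ab_qp (ab_diag q).
by rewrite (span2_pq a mem_span2l ap aq) wedge0l.
Qed.

End Span2.

Arguments span2P {C n a b v}.

Section Annihilator.
Variables (C : fieldType) (n : nat) (K : {vspace 'M[C]_n}).
Implicit Types (u v : 'rV[C]_n) (w k : 'M[C]_n) (s : C).

Lemma KperpD w1 w2 : rv_Kperp K w1 -> rv_Kperp K w2 -> rv_Kperp K (w1 + w2).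
Proof.
move=> [skew1 perp1] [skew2 perp2]; split.
  by rewrite /rv_skew raddfD /= skew1 skew2 opprD.
move=> k kK; move: (perp1 k kK) (perp2 k kK).
by rewrite /rv_pair raddfD /= mulmxDl mxtraceD => -> ->; rewrite addr0.
Qed.

Lemma KperpZ s w : rv_Kperp K w -> rv_Kperp K (s *: w).
Proof.
move=> [skew perp]; split; first by rewrite /rv_skew linearZ /= skew scalerN.
move=> k kK; move: (perp k kK).
by rewrite /rv_pair linearZ /= -scalemxAl mxtraceZ => ->; rewrite mulr0.
Qed.

Definition wedge_form (u : 'rV[C]_n) : 'M[C]_(n, \dim K) :=
  \matrix_(i, j) (u *m (vbasis K)`_j) 0 i.

Lemma wedge_formE u v j : (v *m wedge_form u) 0 j = \tr (u *m (vbasis K)`_j *m v^T).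
Proof.
rewrite /mxtrace big_ord1 [RHS]mxE [LHS]mxE; apply: eq_bigr => i _.
by rewrite [wedge_form _ _ _]mxE [v^T _ _]mxE mulrC.
Qed.

Lemma pair_wedge u v k : rv_skew k ->
  rv_pair (rv_wedge u v) k = 2%:R * \tr (u *m k *m v^T).
Proof.
move=> k_skew.
have tr_wedge (x y : 'rV[C]_n) : \tr ((x^T *m y)^T *m k) = \tr (x *m k *m y^T).
  by rewrite trmx_mul trmxK [LHS]mxtrace_mulC mulmxA [LHS]mxtrace_mulC mulmxA.
have tr_swap : \tr (v *m k *m u^T) = - \tr (u *m k *m v^T).
  by rewrite -mxtrace_tr !trmx_mul trmxK k_skew mulNmx mulmxN mulmxA raddfN.
rewrite /rv_pair /rv_wedge raddfB /= mulmxBl raddfB /= !tr_wedge tr_swap opprK.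
by rewrite mulr_natl mulr2n.
Qed.

Lemma Kperp_wedgeP u v : (forall k, k \in K -> rv_skew k) -> 2%:R != 0 :> C ->
  rv_Kperp K (rv_wedge u v) <-> v *m wedge_form u = 0.
Proof.
move=> Kskew two0.
have pair0 k : k \in K -> rv_pair (rv_wedge u v) k = 0 <-> \tr (u *m k *m v^T) = 0.
  move=> kK; rewrite pair_wedge; last exact: Kskew.
  by split=> [/eqP | ->]; rewrite ?mulr0 // mulf_eq0 (negbTE two0) => /eqP.
split=> [[_ perp] | form0].
  apply/rowP => j; rewrite wedge_formE mxE.
  have kjK : (vbasis K)`_j \in K by apply: vbasis_mem; rewrite mem_nth // size_tuple.
  by apply/(pair0 _ kjK); apply: perp.
split=> [|k kK]; first exact: wedge_skew.
apply/(pair0 _ kK); rewrite (coord_vbasis kK) mulmx_sumr mulmx_suml raddf_sum /=.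
apply: big1 => j _; rewrite -scalemxAr -scalemxAl linearZ /= -wedge_formE form0.
by rewrite mxE mulr0.
Qed.

End Annihilator.

Section WedgeLimits.
Context {C : numFieldType} {n : nat} {T : Type} {F : set_system T} {FF : Filter F}.

Lemma cvg_wedge (f g : T -> 'rV[C]_n) (lf lg : 'rV[C]_n) :
  f t @[t --> F] --> lf -> g t @[t --> F] --> lg ->
  rv_wedge (f t) (g t) @[t --> F] --> rv_wedge lf lg.
Proof.
by move=> fl gl; rewrite /rv_wedge; apply: cvgB; apply: cvg_mulmx => //; exact: cvg_trmx.
Qed.

Lemma cvg_wedge_form (K : {vspace 'M[C]_n}) (f : T -> 'rV[C]_n) (l : 'rV[C]_n) :
  f t @[t --> F] --> l -> wedge_form K (f t) @[t --> F] --> wedge_form K l.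
Proof.
move=> fl; apply/cvg_mxP => i j; under eq_cvg do rewrite mxE; rewrite mxE.
exact: (cvg_mxP _ _).1 (cvg_mulmx fl (cvg_cst (vbasis K)`_j)) 0 i.
Qed.

End WedgeLimits.

Lemma near_notin_span2 (C : numFieldType) n (a b x : 'rV[C]_n) p q :
  rv_wedge a b p q != 0 -> x \notin <<[:: a; b]>>%VS ->
  \forall u \near x, u \notin <<[:: a; b]>>%VS.
Proof.
move=> ab_pq xS.
have proj_cvg : span2_proj a b p q u - u @[u --> x] --> span2_proj a b p q x - x.
  apply: cvgB cvg_id; apply: cvgZ (cvg_cst _) _.
  apply: cvgD; apply: cvgZ _ (cvg_cst _); apply: (cvg_mxP _ _).1; apply: cvg_wedge;
    solve [exact: cvg_id | exact: cvg_cst].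
have proj_x : span2_proj a b p q x - x != 0.
  by rewrite subr_eq0; apply: contraNneq xS => <-; exact: span2_proj_mem.
apply: filterS (cvgr_neq0 _ proj_cvg proj_x) => u; rewrite subr_eq0.
by apply: contraNN => uS; rewrite span2_projE.
Qed.

Section IsolatedWedge.
Variables (C : numFieldType) (n : nat) (K : {vspace 'M[C]_n}) (a b : 'rV[C]_n).
Hypotheses (Kskew : forall k, k \in K -> rv_skew k) (Kab : rv_Kperp K (rv_wedge a b))
  (ab0 : rv_wedge a b != 0).
Hypothesis ab_isolated : \forall w \near rv_wedge a b,
  (rv_Kperp K w /\ (exists c d, w = rv_wedge c d) /\ w != 0) ->
  exists t : C, w = t *: rv_wedge a b.
Implicit Types (u v x y c : 'rV[C]_n).
Local Notation span2 := <<[:: a; b]>>%VS.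

Let two_neq0 : 2%:R != 0 :> C. Proof. by rewrite pnatr_eq0. Qed.

Let KperpP u v : rv_Kperp K (rv_wedge u v) <-> v *m wedge_form K u = 0.
Proof. exact: Kperp_wedgeP. Qed.

Lemma near_isolated_wedge T (F : set_system T) {FF : Filter F} (W : T -> 'M[C]_n) :
  W t @[t --> F] --> rv_wedge a b ->
  \forall t \near F, rv_Kperp K (W t) -> (exists c d, W t = rv_wedge c d) ->
    W t != 0 /\ exists s : C, W t = s *: rv_wedge a b.
Proof.
move=> Wab; apply: filterS2 (cvgr_neq0 _ Wab ab0) (Wab _ ab_isolated) => t W0 iso KW decW.
by split=> //; apply: iso.
Qed.

(* Perturb [a /\ b = x /\ y] to [x /\ (y + e c)] inside [K^perp]; by isolation the
   perturbation stays proportional to [a /\ b]. *)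
Lemma Kperp_wedge_mem_span2 x c : x \in span2 -> x != 0 ->
  rv_Kperp K (rv_wedge x c) -> c \in span2.
Proof.
move=> Sx x0 Kxc; have [y _ xy_ab] := span2_wedge_eq Sx x0.
pose W e := rv_wedge a b + e *: rv_wedge x c.
have e_cvg : e @[e --> (0 : C)] --> (0 : C) := cvg_id.
have W_ab : W e @[e --> (0 : C)] --> rv_wedge a b + 0 *: rv_wedge x c.
  exact: cvgD (cvg_cst _) (cvgZ e_cvg (cvg_cst _)).
rewrite scale0r addr0 in W_ab.
have [e [e0 We]] := filter_ex
  (filterI (nbhs_dnbhs_neq (0 : C)) (nbhs_dnbhs (near_isolated_wedge W_ab))).
have W_dec : exists c' d, W e = rv_wedge c' d.
  by exists x, (y + e *: c); rewrite wedgeDr wedgeZr xy_ab.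
have [_ [s Ws]] := We (KperpD Kab (KperpZ e Kxc)) W_dec.
apply: (mem_span2_wedger Sx x0 (mu := e^-1 * (s - 1))).
by rewrite -scalerA scalerBl scale1r -Ws /W addrC addKr scalerA mulVf // scale1r.
Qed.

Lemma wedge_coord_free x p q : x \in span2 -> x != 0 -> rv_wedge a b p q != 0 ->
  row_free (row_mx (wedge_form K x) (coord2_mx p q)).
Proof.
move=> Sx x0 ab_pq; rewrite -kermx_eq0; apply/rowV0P => c /sub_kermxP.
rewrite mul_mx_row => /eqP; rewrite row_mx_eq0.
move=> /andP[/eqP/KperpP Kxc /eqP/coord2_mx_eq0[cp cq]].
have Sc := Kperp_wedge_mem_span2 Sx x0 Kxc.
exact: (@span2_coord_eq0 _ _ a b p q ab_pq c Sc cp cq).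
Qed.

Lemma Kperp_interpolate u z p q y :
  rv_Kperp K (rv_wedge u z) -> rv_wedge u z != 0 ->
  (forall c, c *m row_mx (wedge_form K u) (coord2_mx p q) = 0 -> c = 0) ->
  exists2 y', rv_Kperp K (rv_wedge u y') & y' 0 p = y 0 p /\ y' 0 q = y 0 q.
Proof.
move=> Kuz uz0 Yu_inj.
have Kspan v : v \in <<[:: u; z]>>%VS -> rv_Kperp K (rv_wedge u v).
  by case/span2P=> s [t ->]; rewrite wedge_combr; exact: KperpZ.
have uz_pq : rv_wedge u z p q != 0.
  apply: wedge_coord_neq0 uz0 _ => c Sc cp cq; apply: Yu_inj.
  have c_form : c *m wedge_form K u = 0 by apply/KperpP/Kspan.
  have c_coord : c *m coord2_mx p q = 0 by apply/coord2_mx_eq0.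
  by rewrite mul_mx_row c_form c_coord row_mx0.
by have [y' /Kspan] := span2_interpolate uz_pq y; exists y'.
Qed.

Lemma near_resonance_mem_span2 x : x \in span2 -> x != 0 ->
  \forall u \near x, rv_resonance K u -> u \in span2.
Proof.
move=> Sx x0; have [y _ xy_ab] := span2_wedge_eq Sx x0.
have /matrix0Pn[p [q ab_pq]] := ab0.
have u_cvg : u @[u --> x] --> x := cvg_id.
pose Y u := row_mx (wedge_form K u) (coord2_mx p q).
have Y_cvg : Y u @[u --> x] --> Y x.
  exact: cvg_row_mx (cvg_wedge_form u_cvg) (cvg_cst _).
have Yx_free := wedge_coord_free Sx x0 ab_pq.
pose r u := row_mx (- y *m wedge_form K u) (0 : 'rV[C]_2).
have r_cvg : r u @[u --> x] --> (0 : 'rV_(\dim K + 2)).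
  have <- : r x = 0 by rewrite /r mulNmx (KperpP _ _).1 ?xy_ab // oppr0 row_mx0.
  exact: cvg_row_mx (cvg_mulmx (cvg_cst _) (cvg_wedge_form u_cvg)) (cvg_cst _).
have [D D0 solD] := cvg_row_free_solve Y_cvg Yx_free r_cvg.
have W_cvg : rv_wedge u (y + D u) @[u --> x] --> rv_wedge a b.
  by rewrite -xy_ab -[y in rv_wedge x y]addr0; exact: cvg_wedge u_cvg (cvgD (cvg_cst _) D0).
apply: filterS3 (near_row_free_inj Y_cvg Yx_free) solD (near_isolated_wedge W_cvg).
move=> u Yu_inj solDu iso [[z [Kuz uz0]] | ->]; last exact: mem0v.
have [y' Ky' [y'p y'q]] := Kperp_interpolate y Kuz uz0 Yu_inj.
have y'_form : y' *m wedge_form K u = 0 := (KperpP _ _).1 Ky'.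
have y'E : y' = y + D u.
  rewrite -[y'](subrK y) addrC; congr (_ + _); apply: solDu.
  rewrite mul_mx_row mulmxBl y'_form sub0r -mulNmx; congr row_mx.
  by apply/coord2_mx_eq0; rewrite !mxE y'p y'q !subrr.
have W_dec : exists c d, rv_wedge u (y + D u) = rv_wedge c d by exists u, (y + D u).
rewrite y'E in Ky'; have [W0 [s Ws]] := iso Ky' W_dec.
exact: mem_span2_wedge Ws W0.
Qed.

Local Notation S := (rv_span2 a b `\` [set 0]).
Local Notation A := (rv_resonance K `\` [set 0]).

Lemma separated_punctured_span2 : separated S (A `\` S).
Proof.
have /matrix0Pn[p [q ab_pq]] := ab0.
split; apply/seteqP; split=> // v [].
  move=> clSv [[Av v0] nSv]; apply: nSv; split=> //.
  apply: contrapT => /negP nSv'.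
  by have [w [[Sw _] /negP]] := clSv _ (near_notin_span2 ab_pq nSv').
move=> [Sv v0] clAv.
have [w [[[Aw w0] nSw] Sw]] := clAv _ (near_resonance_mem_span2 Sv (introN eqP v0)).
by apply: nSw; split=> //; exact: Sw.
Qed.

End IsolatedWedge.

Lemma connected_component_separated {T : topologicalType} (A S : set T) x :
  S x -> S `<=` A -> connected S -> separated S (A `\` S) -> connected_component A x = S.
Proof.
move=> Sx SA S_conn sep; apply/seteqP; split; last exact: connected_component_max.
have cover : connected_component A x `<=` S `|` (A `\` S).
  by move=> y /connected_component_sub Ay; have [Sy | nSy] := pselect (S y); [left | right].
have [//|sub] := connected_subset sep cover (@component_connected _ A x).
by have [] := sub x (connected_component_refl (SA x Sx)).
Qed.

Section ComplexSpan.
Variables (R : realType) (n : nat).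
Local Notation C := R[i].

Lemma continuous_real_complex : continuous (fun r : R => r%:C%C : C).
Proof.
move=> r0; apply/cvg_ballP => e e0.
have eR : e = (complex.Re e)%:C%C.
  by move: e0; rewrite ltcE /= => /andP[/eqP He _]; case: e He => x y /= ->.
have e0' : 0 < complex.Re e by move: e0; rewrite ltcE /= => /andP[_].
exists (complex.Re e) => // r /= r0r; rewrite /ball /= eR -rmorphB /=.
by rewrite normc_def /= expr0n addr0 sqrtr_sqr ltcR.
Qed.

Lemma line_connected_component (S : set 'rV[C]_n) u v :
  (forall r : R, S (u + r%:C%C *: (v - u))) -> connected_component S u v.
Proof.
move=> S_line; pose phi (r : R) := u + r%:C%C *: (v - u).
have phi_cont : continuous phi.
  move=> r; apply: cvgD; first exact: cvg_cst.
  by apply: cvgZ; [exact: continuous_real_complex | exact: cvg_cst].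
have R_conn : connected [set: R] by apply/connected_intervalP => ? ? _ _ ? _.
exists (range phi); last by exists 1; rewrite // /phi scale1r addrC subrK.
split; first by exists 0; rewrite // /phi scale0r addr0.
  by move=> _ [r _ <-]; exact: S_line.
by apply: connected_continuous_connected R_conn _; exact: continuous_subspaceT.
Qed.

Lemma connected_punctured_span2 (a b : 'rV[C]_n) : rv_wedge a b != 0 ->
  connected (rv_span2 a b `\` [set 0]).
Proof.
move=> ab0; set S := rv_span2 a b `\` [set 0].
have line_S u v : u \in <<[:: a; b]>>%VS -> v \in <<[:: a; b]>>%VS ->
    rv_wedge u v != 0 -> connected_component S u v.
  move=> Su Sv uv0; apply: line_connected_component => r.
  have -> : u + r%:C%C *: (v - u) = (1 - r%:C%C) *: u + r%:C%C *: v.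
    by apply/rowP => j; rewrite !mxE; ring.
  split; first by rewrite /rv_span2 /= memvD // memvZ.
  move=> /(wedge_free uv0)[r1 r0]; move: r1.
  by rewrite r0 subr0 => /eqP; rewrite oner_eq0.
have a0 : a != 0 by apply: contraNneq ab0 => ->; rewrite wedge0l.
have aS : S a by split; [exact: mem_span2l | exact/eqP].
suff -> : S = connected_component S a by exact: component_connected.
apply/seteqP; split=> [v [Sv /eqP v0] | ]; last exact: connected_component_sub.
have [av0 | av0] := eqVneq (rv_wedge a v) 0; last exact: line_S (mem_span2l a b) Sv av0.
have [l vE] := wedge_eq0_colinear a0 av0.
have bv0 : rv_wedge b v != 0.
  rewrite vE wedgeZr wedgeC scalerN oppr_eq0 scaler_eq0 negb_or ab0 andbT.
  by apply: contraNneq v0 => l0; rewrite vE l0 scale0r.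
apply: connected_component_trans (line_S _ _ (mem_span2l a b) (mem_span2r a b) ab0) _.
exact: line_S (mem_span2r a b) Sv bv0.
Qed.

End ComplexSpan.

Theorem proposition2p6 (R : realType) (n : nat) (K : {vspace 'M[R[i]]_n})
  (a b : 'rV[R[i]]_n) :
  (forall k, k \in K -> rv_skew k) ->
  rv_Kperp K (rv_wedge a b) -> rv_wedge a b != 0 ->
  (* [a /\ b] is an isolated point of P K^perp \cap Gr_2(V^\vee) *)
  (\forall w \near rv_wedge a b,
      (rv_Kperp K w /\ (exists c d, w = rv_wedge c d) /\ w != 0) ->
      exists t : R[i], w = t *: rv_wedge a b) ->
  (* l_ab is a connected component of P R(V,K) *)
  connected_component (rv_resonance K `\` [set 0]) a = rv_span2 a b `\` [set 0]
  (* and <a,b> is rv_isotropic *)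
  /\ rv_isotropic K (rv_span2 a b).
Proof.
move=> Kskew Kab ab0 ab_isolated; split; last first.
  by move=> x y Sx Sy; have [mu ->] := wedge_span2 Sx Sy; exact: KperpZ.
have a0 : a != 0 by apply: contraNneq ab0 => ->; rewrite wedge0l.
apply: connected_component_separated.
- by split; [exact: mem_span2l | exact/eqP].
- move=> x [Sx /eqP x0]; split; last exact/eqP.
  by have [y _ xy_ab] := span2_wedge_eq Sx x0; left; exists y; rewrite xy_ab.
- exact: connected_punctured_span2.
- exact: separated_punctured_span2.
Qed.
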